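(* Let $S$ be a straight left I-order in an inverse semigroup $Q$, and let $a,b,c,d\in S$ with $a\,\mathcal{R}^Q\,b$ and $c\,\mathcal{R}^Q\,d$. Then $a^{-1}b=c^{-1}d$ in $Q$ if and only if there exist $x,y\in S$ such that \[xa=yc,\quad xb=yd,\quad x\,\mathcal{R}^Q\,xa\,\mathcal{L}^Q\,a,\quad y\,\mathcal{R}^Q\,yc\,\mathcal{L}^Q\,c.\]
   Context: $a^{-1}$ is the unique inverse of $a$ in $Q$; $\mathcal{R}^Q,\mathcal{L}^Q$ are Green's relations of $Q$. A subsemigroup $S$ of $Q$ is a straight left I-order in $Q$ if every $q\in Q$ can be written $q=a^{-1}b$ with $a,b\in S$ and $a\,\mathcal{R}^Q\,b$. *)

Record InverseSemigroup := {
  carrier :> Type;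
  mul : carrier -> carrier -> carrier;
  inv : carrier -> carrier;
  mul_assoc : forall x y z, mul x (mul y z) = mul (mul x y) z;
  inv_l : forall a, mul (mul a (inv a)) a = a;
  inv_r : forall a, mul (mul (inv a) a) (inv a) = inv a;
  inv_unique : forall a b, mul (mul a b) a = a -> mul (mul b a) b = b -> b = inv a
}.

Arguments mul {_} _ _.
Arguments inv {_} _.

Section Green.
Variable Q : InverseSemigroup.

(** Green's R-relation: a Q^1 = b Q^1. *)
Definition greenR (a b : Q) : Prop :=
  (a = b \/ exists u : Q, a = mul b u) /\ (b = a \/ exists u : Q, b = mul a u).

(** Green's L-relation: Q^1 a = Q^1 b. *)
Definition greenL (a b : Q) : Prop :=
  (a = b \/ exists u : Q, a = mul u b) /\ (b = a \/ exists u : Q, b = mul u a).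

Definition subsemigroup (S : Q -> Prop) : Prop :=
  forall a b, S a -> S b -> S (mul a b).

Definition straight_left_I_order (S : Q -> Prop) : Prop :=
  subsemigroup S /\
  forall q : Q, exists a b : Q, S a /\ S b /\ greenR a b /\ q = mul (inv a) b.
End Green.

Arguments greenR {Q} _ _.
Arguments greenL {Q} _ _.
Arguments subsemigroup {Q} _.
Arguments straight_left_I_order {Q} _.

(* When a R b, (a^-1 b)(a^-1 b)^-1 = a^-1 a, so equal quotients force
   a^-1 a = c^-1 c.  Writing a c^-1 = x^-1 y with x R y in S, one gets
   y = x a c^-1, hence x a = y c and x b = y d, and each Green relation is
   witnessed by an explicit factorisation.  Conversely, x a L a gives
   a (x a)^-1 (x a) = a, which lets x be cancelled:
   (x a)^-1 (x b) = a^-1 b. *)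

From Stdlib Require Import Setoid.

Section InverseSemigroupTheory.
Variable Q : InverseSemigroup.

Local Infix "*" := (@mul Q).
Local Notation "x ^-1" := (@inv Q x) (at level 2, left associativity, format "x ^-1").

Ltac by_assoc := repeat rewrite mul_assoc; reflexivity.

Lemma mulKVl (w a : Q) : w * a * a^-1 * a = w * a.
Proof. rewrite <- !mul_assoc, (mul_assoc _ a), inv_l. reflexivity. Qed.

Lemma invK (a : Q) : a^-1^-1 = a.
Proof. symmetry. apply inv_unique; [apply inv_r | apply inv_l]. Qed.

Lemma inv_idem (e : Q) : e * e = e -> e^-1 = e.
Proof. intro He. symmetry. apply inv_unique; rewrite He; exact He. Qed.

Lemma idem_mul (e f : Q) : e * e = e -> f * f = f -> (e * f) * (e * f) = e * f.
Proof.
  intros He Hf.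
  set (z := (e * f)^-1).
  assert (Hz1 : e * f * z * (e * f) = e * f) by apply inv_l.
  assert (Hz2 : z * (e * f) * z = z) by apply inv_r.
  (* f z e is another inverse of e f *)
  assert (Hfze : f * z * e = z).
  { apply inv_unique.
    - transitivity (e * f * z * (e * f)); [| exact Hz1].
      transitivity (e * (f * f) * z * (e * e) * f); [by_assoc |].
      rewrite He, Hf. by_assoc.
    - transitivity (f * (z * (e * f) * z) * e); [| rewrite Hz2; reflexivity].
      transitivity (f * z * (e * e) * (f * f) * z * e); [by_assoc |].
      rewrite He, Hf. by_assoc. }
  assert (Hzz : z * z = z).
  { rewrite <- Hfze at 1 2.
    transitivity (f * (z * (e * f) * z) * e); [by_assoc |].
    rewrite Hz2. exact Hfze. }
  assert (Hef : e * f = z).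
  { rewrite <- (inv_idem z Hzz). apply inv_unique; [exact Hz2 | exact Hz1]. }
  rewrite Hef. exact Hzz.
Qed.

Lemma idem_comm (e f : Q) : e * e = e -> f * f = f -> e * f = f * e.
Proof.
  intros He Hf.
  assert (Hef := idem_mul e f He Hf).
  assert (Hfe := idem_mul f e Hf He).
  rewrite <- (inv_idem _ Hef). symmetry. apply inv_unique.
  - transitivity (e * (f * f) * (e * e) * f); [by_assoc |].
    rewrite He, Hf. rewrite <- Hef at 2. by_assoc.
  - transitivity (f * (e * e) * (f * f) * e); [by_assoc |].
    rewrite He, Hf. rewrite <- Hfe at 2. by_assoc.
Qed.

Lemma invM (p q : Q) : (p * q)^-1 = q^-1 * p^-1.
Proof.
  assert (Hp : p^-1 * p * (p^-1 * p) = p^-1 * p).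
  { rewrite mul_assoc, inv_r. reflexivity. }
  assert (Hq : q * q^-1 * (q * q^-1) = q * q^-1).
  { rewrite mul_assoc, inv_l. reflexivity. }
  symmetry. apply inv_unique.
  - transitivity (p * (q * q^-1 * (p^-1 * p)) * q); [by_assoc |].
    rewrite (idem_comm _ _ Hq Hp).
    transitivity (p * p^-1 * p * (q * q^-1 * q)); [by_assoc |].
    rewrite !inv_l. reflexivity.
  - transitivity (q^-1 * (p^-1 * p * (q * q^-1)) * p^-1); [by_assoc |].
    rewrite (idem_comm _ _ Hp Hq).
    transitivity (q^-1 * q * q^-1 * (p^-1 * p * p^-1)); [by_assoc |].
    rewrite !inv_r. reflexivity.
Qed.

Lemma greenR_sym (a b : Q) : greenR a b -> greenR b a.
Proof. intros [H1 H2]. split; assumption. Qed.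

Lemma greenL_sym (a b : Q) : greenL a b -> greenL b a.
Proof. intros [H1 H2]. split; assumption. Qed.

Lemma greenR_mulVl (a b : Q) : greenR a b -> b * b^-1 * a = a.
Proof.
  intros [[-> | [u ->]] _].
  - apply inv_l.
  - rewrite mul_assoc, inv_l. reflexivity.
Qed.

Lemma greenL_mulVr (a b : Q) : greenL a b -> a * b^-1 * b = a.
Proof.
  intros [[-> | [u ->]] _].
  - apply inv_l.
  - apply mulKVl.
Qed.

Lemma greenR_intro (a b u v : Q) : a = b * u -> b = a * v -> greenR a b.
Proof. intros Ha Hb. split; right; eauto. Qed.

Lemma greenL_intro (a b u v : Q) : a = u * b -> b = v * a -> greenL a b.
Proof. intros Ha Hb. split; right; eauto. Qed.

Lemma ldiv_mulV (a b : Q) : greenR a b -> (a^-1 * b) * (a^-1 * b)^-1 = a^-1 * a.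
Proof.
  intro Hab. rewrite invM, invK.
  transitivity (a^-1 * (b * b^-1 * a)); [by_assoc |].
  rewrite (greenR_mulVl a b Hab). reflexivity.
Qed.

Lemma mul_ldiv (a b : Q) : greenR a b -> a * (a^-1 * b) = b.
Proof.
  intro Hab. rewrite mul_assoc.
  exact (greenR_mulVl b a (greenR_sym a b Hab)).
Qed.

Lemma ldiv_mull (a b x : Q) : greenR a b -> greenL (x * a) a ->
  (x * a)^-1 * (x * b) = a^-1 * b.
Proof.
  intros Hab Hxa.
  rewrite invM.
  transitivity (a^-1 * (a * (x * a)^-1 * (x * a)) * a^-1 * b).
  - rewrite invM.
    transitivity (a^-1 * a * a^-1 * x^-1 * x * (a * (a^-1 * b))); [| by_assoc].
    rewrite inv_r, (mul_ldiv a b Hab). by_assoc.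
  - rewrite (greenL_mulVr a (x * a) (greenL_sym _ _ Hxa)), inv_r. reflexivity.
Qed.

Lemma common_left_multiple (a c x y : Q) :
  a^-1 * a = c^-1 * c -> greenR x y -> x^-1 * y = a * c^-1 ->
  x * a = y * c /\ greenR x (x * a) /\ greenL (x * a) a.
Proof.
  intros Hac Hxy Hq.
  assert (Hy : y = x * (a * c^-1)).
  { rewrite <- Hq, mul_assoc. symmetry. exact (greenR_mulVl y x (greenR_sym x y Hxy)). }
  assert (Hxa : x * a = y * c).
  { rewrite Hy. symmetry.
    transitivity (x * (a * (c^-1 * c))); [by_assoc |].
    rewrite <- Hac, !mul_assoc, mulKVl. reflexivity. }
  split; [exact Hxa | split].
  - apply (greenR_intro x (x * a) (c^-1 * y^-1 * x) a); [| reflexivity].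
    rewrite <- (greenR_mulVl x y Hxy) at 1. rewrite Hy at 1. by_assoc.
  - apply (greenL_intro (x * a) a x x^-1); [reflexivity |].
    transitivity (a * (c^-1 * c)).
    + rewrite <- Hac, mul_assoc, inv_l. reflexivity.
    + rewrite Hxa, mul_assoc, <- Hq. by_assoc.
Qed.

End InverseSemigroupTheory.

Theorem lemma3p4 (Q : InverseSemigroup) (S : Q -> Prop)
  (HS : straight_left_I_order S)
  (a b c d : Q) (Ha : S a) (Hb : S b) (Hc : S c) (Hd : S d)
  (Hab : greenR a b) (Hcd : greenR c d) :
  mul (inv a) b = mul (inv c) d <->
  exists x y : Q, S x /\ S y /\
    mul x a = mul y c /\ mul x b = mul y d /\
    greenR x (mul x a) /\ greenL (mul x a) a /\
    greenR y (mul y c) /\ greenL (mul y c) c.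
Proof.
  destruct HS as [_ Hdecomp]. split.
  - intro Heq.
    assert (Hac : mul (inv a) a = mul (inv c) c).
    { rewrite <- (ldiv_mulV Q a b Hab), <- (ldiv_mulV Q c d Hcd), Heq. reflexivity. }
    destruct (Hdecomp (mul a (inv c))) as [x [y [Sx [Sy [Hxy Hq]]]]].
    assert (Hq' : mul (inv y) x = mul c (inv a)).
    { transitivity (inv (mul (inv x) y)).
      - rewrite invM, invK. reflexivity.
      - rewrite <- Hq, invM, invK. reflexivity. }
    destruct (common_left_multiple Q a c x y Hac Hxy (eq_sym Hq)) as [Hxa [Rx Lx]].
    destruct (common_left_multiple Q c a y x (eq_sym Hac) (greenR_sym Q x y Hxy) Hq')
      as [_ [Ry Ly]].
    assert (Hxb : mul x b = mul y d).
    { rewrite <- (mul_ldiv Q a b Hab), <- (mul_ldiv Q c d Hcd), Heq, !mul_assoc, Hxa.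
      reflexivity. }
    exists x, y. tauto.
  - intros [x [y [_ [_ [Hxa [Hxb [_ [Lx [_ Ly]]]]]]]]].
    rewrite <- (ldiv_mull Q a b x Hab Lx), <- (ldiv_mull Q c d y Hcd Ly), Hxa, Hxb.
    reflexivity.
Qed.
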